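(* Let $\mathcal L=\langle +,<,0,P\rangle$ with $P$ a unary predicate, and for each $n\in\mathbb N$ let $\mathbb Q_n$ be the $\mathcal L$-structure $(\mathbb Q,+,<,0,\{0,1,\dots,n\})$ (interpreting $P$ as $\{0,\dots,n\}$). Let $\mathcal F$ be a non-principal ultrafilter on $\mathbb N$ and $\mathcal G=\prod_n\mathbb Q_n/\mathcal F$. Then $\mathcal G$ satisfies the scheme DCI but is not o-minimal.
   Context: For an $\mathcal L$-formula $\varphi(v,\bar w)$, $\mathrm{DCI}_\varphi$ is the sentence $\forall\bar w\Big(\big(\exists s\,\forall v<s\,\varphi(v,\bar w)\ \wedge\ \forall v\big(\forall s<v\,\varphi(s,\bar w)\to\exists u>v\,\forall s<u\,\varphi(s,\bar w)\big)\big)\to\forall v\,\varphi(v,\bar w)\Big)$, and DCI is the scheme $\{\mathrm{DCI}_\varphi:\varphi(v,\bar w)\text{ an }\mathcal L\text{-formula}\}$. A linearly ordered structure is o-minimal if every subset definable (with parameters) is a finite union of open intervals and points. *)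

From mathcomp Require Import all_boot all_order all_algebra.
From Stdlib Require List.
Unset Printing Implicit Defensive.
Import Order.TTheory GRing.Theory Num.Theory.

Inductive term : Type :=
  | tvar : nat -> term
  | tzero : term
  | tplus : term -> term -> term.

Inductive formula : Type :=
  | fEq  : term -> term -> formula
  | fLt  : term -> term -> formula
  | fP   : term -> formula
  | fBot : formula
  | fNot : formula -> formula
  | fAnd : formula -> formula -> formula
  | fOr  : formula -> formula -> formula
  | fImp : formula -> formula -> formula
  | fAll : nat -> formula -> formula
  | fEx  : nat -> formula -> formula.

(* The equality symbol is interpreted by [seq_] (a congruence);
   for an ordinary structure take Leibniz equality.  This lets us present the
   ultraproduct directly on representatives. *)
Record Lstruct : Type := {
  carrier :> Type;
  seq_ : carrier -> carrier -> Prop;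
  sadd : carrier -> carrier -> carrier;
  szero : carrier;
  slt : carrier -> carrier -> Prop;
  sP : carrier -> Prop }.

Definition upd {M : Lstruct} (e : nat -> M) (i : nat) (x : M) : nat -> M :=
  fun j => if j == i then x else e j.

Fixpoint teval (M : Lstruct) (e : nat -> M) (t : term) : M :=
  match t with
  | tvar i => e i
  | tzero => szero M
  | tplus t1 t2 => sadd M (teval M e t1) (teval M e t2)
  end.

Fixpoint sat (M : Lstruct) (e : nat -> M) (f : formula) : Prop :=
  match f with
  | fEq t1 t2 => seq_ M (teval M e t1) (teval M e t2)
  | fLt t1 t2 => slt M (teval M e t1) (teval M e t2)
  | fP t => sP M (teval M e t)
  | fBot => False
  | fNot g => ~ sat M e g
  | fAnd g h => sat M e g /\ sat M e h
  | fOr g h => sat M e g \/ sat M e h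
  | fImp g h => sat M e g -> sat M e h
  | fAll i g => forall x : M, sat M (upd e i x) g
  | fEx i g => exists x : M, sat M (upd e i x) g
  end.

Definition DCI (M : Lstruct) : Prop :=
  forall (phi : formula) (v : nat) (e : nat -> M),
    let A := fun x : M => sat M (upd e v x) phi in
    ((exists s : M, forall x : M, slt M x s -> A x) /\
     (forall y : M, (forall x : M, slt M x y -> A x) ->
        exists u : M, slt M y u /\ forall x : M, slt M x u -> A x))
    -> forall y : M, A y.

Definition definable (M : Lstruct) (X : M -> Prop) : Prop :=
  exists (phi : formula) (v : nat) (e : nat -> M),
    forall x : M, X x <-> sat M (upd e v x) phi.

(* Pieces of a finite union: points, and open intervals with endpoints in
   M or +-infinity ([None]). *)
Inductive piece (M : Lstruct) : Type :=
  | ppoint : carrier M -> piece M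
  | pinterval : option (carrier M) -> option (carrier M) -> piece M.

Definition in_piece (M : Lstruct) (p : piece M) (x : M) : Prop :=
  match p with
  | ppoint c => seq_ M x c
  | pinterval lo hi =>
      (match lo with None => True | Some a => slt M a x end) /\
      (match hi with None => True | Some b => slt M x b end)
  end.

Definition o_minimal (M : Lstruct) : Prop :=
  forall X : M -> Prop, definable M X ->
    exists l : list (piece M),
      forall x : M, X x <-> exists2 p, List.In p l & in_piece M p x.

Definition ultrafilter (F : (nat -> Prop) -> Prop) : Prop :=
  [/\ F (fun _ => True),
      ~ F (fun _ => False),
      (forall A B : nat -> Prop, F A -> (forall n, A n -> B n) -> F B),
      (forall A B : nat -> Prop, F A -> F B -> F (fun n => A n /\ B n))
    & (forall A : nat -> Prop, F A \/ F (fun n => ~ A n))].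

Definition nonprincipal (F : (nat -> Prop) -> Prop) : Prop :=
  forall m : nat, ~ F (fun n => n = m).

Definition Pn (n : nat) (x : rat) : Prop :=
  exists k : nat, (k <= n)%N /\ x = (k%:R : rat).

(* The ultraproduct prod_n Q_n / F, presented on representatives nat -> rat,
   with equality interpreted as F-almost-everywhere equality. *)
Definition ultraQ (F : (nat -> Prop) -> Prop) : Lstruct := {|
  carrier := nat -> rat;
  seq_ := fun a b => F (fun n => a n = b n);
  sadd := fun a b n => (a n + b n)%R;
  szero := fun _ => 0%R;
  slt := fun a b => F (fun n => (a n < b n)%R);
  sP := fun a => F (fun n => Pn n (a n)) |}.

(* Each Q_n eliminates quantifiers down to sign conditions on finitely many
   affine functions of the variables (Fourier-Motzkin elimination; P only adds
   the equations x = k, k <= n).  So every definable subset of Q_n is determined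
   by its position relative to finitely many points, and by density of Q such a
   set satisfies DCI.  Each instance of DCI is a first-order sentence, so it
   passes to the ultraproduct by Łoś's theorem.  In the ultraproduct, P is
   definable and contains the pairwise distinct constants 0, 1, 2, ... (by
   non-principality), while an open interval meeting P always leaves P, because
   coordinatewise P consists of integers.  Hence P is not a finite union of
   points and open intervals. *)

From mathcomp Require Import all_boot all_order all_algebra.
From mathcomp Require Import lra ring zify.
From Stdlib Require Import Classical ClassicalEpsilon PropExtensionality FunctionalExtensionality Setoid.
From Stdlib Require List.
Import Order.TTheory GRing.Theory Num.Theory.

Set Implicit Arguments.
Unset Strict Implicit.

Local Open Scope ring_scope.

(** * Semilinear sets over an ordered field *)

Section Semilinear.
Variable R : realFieldType.
Implicit Types (e : nat -> R) (f g : (nat -> R) -> R) (L : list ((nat -> R) -> R)).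

Definition upd_env e (i : nat) (x : R) : nat -> R :=
  fun j => if j == i then x else e j.

Lemma upd_envC e i j a b : i != j ->
  upd_env (upd_env e i a) j b = upd_env (upd_env e j b) i a.
Proof.
move=> hij; apply: functional_extensionality => k; rewrite /upd_env.
case: (eqVneq k j) => [->|_]; last by [].
by rewrite eq_sym (negbTE hij).
Qed.

Lemma upd_env_id e i a b : upd_env (upd_env e i a) i b = upd_env e i b.
Proof. by apply: functional_extensionality => k; rewrite /upd_env; case: (k == i). Qed.

(* [c] does not depend on [e]: jointly affine, not separately affine in each variable. *)
Definition affine f :=
  forall i, exists c, forall e z, f (upd_env e i z) = f (upd_env e i 0) + z * c.

Lemma affine_cst (c : R) : affine (fun _ => c).
Proof. by move=> i; exists 0 => e z; rewrite mulr0 addr0. Qed.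

Lemma affine_coord j : affine (fun e => e j).
Proof.
move=> i; exists (if j == i then 1 else 0) => e z; rewrite /upd_env.
by case: (j == i); rewrite ?mulr1 ?mulr0 ?add0r ?addr0.
Qed.

Lemma affineD f g : affine f -> affine g -> affine (fun e => f e + g e).
Proof.
move=> hf hg i; have [c hc] := hf i; have [d hd] := hg i.
by exists (c + d) => e z; rewrite hc hd; ring.
Qed.

Lemma affineB f g : affine f -> affine g -> affine (fun e => f e - g e).
Proof.
move=> hf hg i; have [c hc] := hf i; have [d hd] := hg i.
by exists (c - d) => e z; rewrite hc hd; ring.
Qed.

Lemma affine_upd0 f i : affine f -> affine (fun e => f (upd_env e i 0)).
Proof.
move=> hf j; case: (eqVneq j i) => [->|hji].
  by exists 0 => e z; rewrite !upd_env_id mulr0 addr0.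
have [c hc] := hf j; exists c => e z.
by rewrite (upd_envC e z 0 hji) (upd_envC e 0 0 hji) hc.
Qed.

Definition slope f i := f (upd_env (fun=> 0) i 1) - f (upd_env (fun=> 0) i 0).

Lemma affine_slope f i : affine f ->
  forall e z, f (upd_env e i z) = f (upd_env e i 0) + z * slope f i.
Proof.
move=> hf e z; have [c hc] := hf i.
suff -> : slope f i = c by exact: hc.
by rewrite /slope hc; ring.
Qed.

(* The zero of [z |-> f (upd_env e i z)]; junk value [0] when that map is constant. *)
Definition root f i e :=
  if slope f i == 0 then 0 else - f (upd_env e i 0) / slope f i.

Lemma affine_root f i : affine f -> affine (root f i).
Proof.
move=> hf; rewrite /root; case: eqP => _; first exact: affine_cst.
move=> j; have [c hc] := affine_upd0 i hf j.
by exists (- c / slope f i) => e z; rewrite hc; ring.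
Qed.

Lemma sg_affine_upd f i e e' x x' : affine f ->
  Num.sg (f (upd_env e i 0)) = Num.sg (f (upd_env e' i 0)) ->
  Num.sg (x - root f i e) = Num.sg (x' - root f i e') ->
  Num.sg (f (upd_env e i x)) = Num.sg (f (upd_env e' i x')).
Proof.
move=> hf h0; rewrite (affine_slope i hf e x) (affine_slope i hf e' x') /root.
have [->|hc] := eqVneq (slope f i) 0; first by rewrite !mulr0 !addr0.
have factor y e0 : f (upd_env e0 i 0) + y * slope f i
                   = slope f i * (y - - f (upd_env e0 i 0) / slope f i).
  by field.
by rewrite !factor !sgrM => ->.
Qed.

Definition sign_determined L (P : (nat -> R) -> Prop) :=
  forall e e', (forall f, List.In f L -> Num.sg (f e) = Num.sg (f e')) -> P e -> P e'.

Definition semilinear (P : (nat -> R) -> Prop) :=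
  exists2 L, (forall f, List.In f L -> affine f) & sign_determined L P.

Lemma semilinear_ext P Q : (forall e, P e <-> Q e) -> semilinear P -> semilinear Q.
Proof. by move=> hPQ [L hL hP]; exists L => // e e' hs /hPQ /(hP e e' hs) /hPQ. Qed.

Lemma semilinear_eq f g : affine f -> affine g -> semilinear (fun e => f e = g e).
Proof.
move=> hf hg; exists [:: fun e => f e - g e]; first by move=> h [<-|[]]; exact: affineB.
move=> e e' /(_ _ (or_introl erefl)) hs /eqP.
by rewrite -subr_eq0 -sgr_eq0 hs sgr_eq0 subr_eq0 => /eqP.
Qed.

Lemma semilinear_lt f g : affine f -> affine g -> semilinear (fun e => f e < g e).
Proof.
move=> hf hg; exists [:: fun e => g e - f e]; first by move=> h [<-|[]]; exact: affineB.
move=> e e' /(_ _ (or_introl erefl)) hs lt.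
by rewrite -subr_gt0 -sgr_gt0 -hs sgr_gt0 subr_gt0.
Qed.

Lemma semilinear_op (op : Prop -> Prop -> Prop) P Q :
  semilinear P -> semilinear Q -> semilinear (fun e => op (P e) (Q e)).
Proof.
move=> [L1 hL1 hP] [L2 hL2 hQ].
exists (L1 ++ L2) => [f /(List.in_app_or L1 L2 f) [/hL1|/hL2] //|e e' hs].
have same L S : sign_determined L S ->
    (forall f, List.In f L -> Num.sg (f e) = Num.sg (f e')) -> S e = S e'.
  by move=> hS hsL; apply: propositional_extensionality; split; apply: hS => // f /hsL ->.
rewrite (same _ _ hP) ?(same _ _ hQ) // => f hf; apply: hs; apply: List.in_or_app; by [right|left].
Qed.

Lemma semilinear_not P : semilinear P -> semilinear (fun e => ~ P e).
Proof. by move=> hP; exact: (semilinear_op (fun a _ => ~ a) hP hP). Qed.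

Lemma list_argmax (T : Type) (w : T -> R) (Q : T -> Prop) (l : list T) :
  (exists2 t, List.In t l & Q t) ->
  exists t0, [/\ List.In t0 l, Q t0 & forall t, List.In t l -> Q t -> w t <= w t0].
Proof.
elim: l => [[t []]|t l IH] //= hex.
case: (classic (exists2 t', List.In t' l & Q t')) => [/IH [t0 [lt0 Qt0 max0]]|hn].
  case: (classic (Q t /\ w t0 < w t)) => [[Qt lt]|hle].
    exists t; split=> // [|t' [<-|/max0 h /h]]; [by left|by []|].
    by move=> ?; exact: le_trans (ltW lt).
  exists t0; split=> // [|t' [<- Qt|/max0 //]]; first by right.
  by rewrite leNgt; apply/negP => lt; apply: hle.
have Qt : Q t by case: hex => t' [<-|lt'] // Qt'; case: hn; exists t'.
by exists t; split=> // [|t' [<-|lt'] // Qt']; [left|case: hn; exists t'].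
Qed.

Lemma exists_between (lo hi : list R) :
  (forall x y, List.In x lo -> List.In y hi -> x < y) ->
  exists z, (forall x, List.In x lo -> x < z) /\ (forall y, List.In y hi -> z < y).
Proof.
move=> hlohi.
have extremum (w : R -> R) a l : List.In a l ->
    exists2 m, List.In m l & forall x, List.In x l -> w x <= w m.
  move=> al; have [|m [lm _ hm]] := @list_argmax _ w (fun=> True) l; first by exists a.
  by exists m => // x /hm; apply.
case: lo hi hlohi => [|a lo] [|b hi] hlohi.
- by exists 0.
- have [m hm minm] := extremum (fun x => - x) b (b :: hi) (or_introl erefl).
  by exists (m - 1); split=> // y /minm; rewrite lerN2; lra.
- have [M hM maxM] := extremum id a (a :: lo) (or_introl erefl).
  by exists (M + 1); split=> // x /maxM /=; lra.
have [M hM maxM] := extremum id a (a :: lo) (or_introl erefl).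
have [m hm minm] := extremum (fun x => - x) b (b :: hi) (or_introl erefl).
have := hlohi _ _ hM hm => Mm.
by exists ((M + m) / 2); split=> [x /maxM|y /minm]; rewrite ?lerN2 /=; lra.
Qed.

Lemma extend_sign_pattern (T : Type) (l : list T) (a b : T -> R) :
  (forall t t', List.In t l -> List.In t' l -> Num.sg (a t - a t') = Num.sg (b t - b t')) ->
  forall z, exists z', forall t, List.In t l -> Num.sg (z - a t) = Num.sg (z' - b t).
Proof.
move=> hab z.
case: (classic (exists2 t0, List.In t0 l & a t0 = z)) => [[t0 lt0 <-]|hz].
  by exists (b t0) => t lt; exact: hab.
have mono t t' : List.In t l -> List.In t' l -> a t < a t' -> b t < b t'.
  by move=> lt lt'; rewrite -subr_lt0 -sgr_lt0 hab // sgr_lt0 subr_lt0.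
pose side (below : bool) := List.map b (List.filter (fun t => (a t < z) == below) l).
have in_side below y : List.In y (side below) ->
    exists t, [/\ y = b t, List.In t l & (a t < z) = below].
  by case/List.in_map_iff => t [<- /List.filter_In [lt /eqP atz]]; exists t.
have sep x y : List.In x (side true) -> List.In y (side false) -> x < y.
  move=> /in_side [t [-> lt at_z]] /in_side [t' [-> lt' /negbT]].
  by rewrite -leNgt => zt'; apply: mono => //; exact: lt_le_trans zt'.
have [z' [hlo hhi]] := exists_between sep.
exists z' => t lt.
have bt below : (a t < z) = below -> List.In (b t) (side below).
  move=> hb; apply/List.in_map_iff; exists t; split=> //.
  by apply/List.filter_In; rewrite hb eqxx.
case: (ltgtP (a t) z) => atz.
- by rewrite !gtr0_sg ?subr_gt0 //; apply: hlo; apply: bt.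
- by rewrite !ltr0_sg ?subr_lt0 //; apply: hhi; apply: bt; rewrite ltNge ltW.
- by case: hz; exists t.
Qed.

Lemma semilinear_exists P i :
  semilinear P -> semilinear (fun e => exists z, P (upd_env e i z)).
Proof.
move=> [L hL hP].
pose L0 := List.map (fun f e => f (upd_env e i 0)) L.
pose gaps := List.flat_map (fun f => List.map (fun h e => root f i e - root h i e) L) L.
exists (L0 ++ gaps).
  move=> g /(List.in_app_or L0 gaps g) [/List.in_map_iff [f [<- /hL hf]]|].
    exact: affine_upd0.
  case/List.in_flat_map => f [/hL hf /List.in_map_iff [h [<- /hL hh]]].
  exact: affineB (affine_root _ hf) (affine_root _ hh).
(* The sign of [f] at [e[i := z]] is fixed by its sign at [e[i := 0]] and by
   the position of [z] among the roots of [L] in the variable [i]. *)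
move=> e e' hs [z hz].
have same_gaps f h : List.In f L -> List.In h L ->
    Num.sg (root f i e - root h i e) = Num.sg (root f i e' - root h i e').
  move=> lf lh; apply: (hs (fun e => root f i e - root h i e)).
  apply: List.in_or_app; right; apply/List.in_flat_map; exists f; split=> //.
  by apply/List.in_map_iff; exists h.
have [z' hz'] := extend_sign_pattern same_gaps z.
exists z'; apply: hP hz => f lf; apply: sg_affine_upd (hL f lf) _ (hz' f lf).
apply: (hs (fun e => f (upd_env e i 0))).
by apply: List.in_or_app; left; apply/List.in_map_iff; exists f.
Qed.

Lemma semilinear_forall P i :
  semilinear P -> semilinear (fun e => forall z, P (upd_env e i z)).
Proof.
move=> /semilinear_not /(semilinear_exists i) /semilinear_not; apply: semilinear_ext.
by move=> e; split=> [hn z|hall [z]]; [apply: NNPP => hz; apply: hn; exists z|apply].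
Qed.

Lemma semilinear_fiber P i e : semilinear P ->
  exists B : list R, forall x y,
    (forall r, List.In r B -> Num.sg (x - r) = Num.sg (y - r)) ->
    P (upd_env e i x) -> P (upd_env e i y).
Proof.
move=> [L hL hP]; exists (List.map (fun f => root f i e) L) => x y hxy.
apply: hP => f lf; apply: sg_affine_upd (hL f lf) erefl _.
by apply: hxy; apply/List.in_map_iff; exists f.
Qed.

Lemma dci_of_sign_pattern (A : R -> Prop) (B : list R) :
  (forall x y, (forall r, List.In r B -> Num.sg (x - r) = Num.sg (y - r)) -> A x -> A y) ->
  ((exists s, forall x, x < s -> A x) /\
   (forall y, (forall x, x < y -> A x) -> exists u, y < u /\ forall x, x < u -> A x)) ->
  forall y, A y.
Proof.
(* [b] is the largest point of [s :: B] below which [A] holds; between [b] and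
   the next point of [B] the sign pattern is constant, so [A] reaches past it. *)
move=> hB [[s hs] hstep].
pose T y := forall x, x < y -> A x.
have [b [_ Tb bmax]] := @list_argmax _ id T (s :: B) (ex_intro2 _ _ s (or_introl erefl) hs).
have [u [bu Tu]] := hstep b Tb.
have beyond x y : b < x -> b < y ->
    (forall r, List.In r B -> b < r -> x < r /\ y < r) -> A x -> A y.
  move=> bx b_y hxy; apply: hB => r rB; case: (leP r b) => rb.
    by rewrite !gtr0_sg //; lra.
  by have [xr yr] := hxy r rB rb; rewrite !ltr0_sg //; lra.
case: (classic (exists2 r, List.In r B & b < r)) => [hex|hnone]; last first.
  move=> y; case: (ltP y u) => [/Tu //|uy].
  apply: (beyond ((b + u) / 2)); [lra|lra| |apply: Tu; lra].
  by move=> r rB br; case: hnone; exists r.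
have [r' [r'B br' minr']] := @list_argmax _ (fun r => - r) (fun r => b < r) B hex.
suff Tr' : T r' by have := bmax r' (or_intror r'B) Tr'; rewrite /=; lra.
move=> x xr'; case: (ltP x u) => [/Tu //|ux].
apply: (beyond ((b + u) / 2)); [lra|lra| |apply: Tu; lra].
by move=> r rB br; have := minr' r rB br; rewrite lerN2; lra.
Qed.

End Semilinear.

(** * The structures Q_n *)

Definition Qn (n : nat) : Lstruct := {|
  carrier := rat; seq_ := @eq rat; sadd := fun a b => a + b; szero := 0;
  slt := fun a b => a < b; sP := Pn n |}.

Lemma teval_affine n t : affine (fun e : nat -> rat => teval (Qn n) e t).
Proof.
by elim: t => [j||t1 IH1 t2 IH2] /=; [exact: affine_coord|exact: affine_cst|exact: affineD].
Qed.

Lemma semilinear_Pn n (f : (nat -> rat) -> rat) :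
  affine f -> semilinear (fun e => Pn n (f e)).
Proof.
move=> hf; elim: n => [|n IH].
  apply: semilinear_ext (semilinear_eq hf (affine_cst 0)) => e.
  by split=> [->|[k [/[!leqn0]/eqP -> ->]]] //; exists 0%N.
apply: semilinear_ext (semilinear_op or IH (semilinear_eq hf (affine_cst n.+1%:R))) => e.
split=> [[[k [kn ->]]|->]|[k []]]; first by exists k; split=> //; exact: leqW.
  by exists n.+1.
by rewrite leq_eqVlt ltnS => /orP [/eqP -> ->|kn ->]; [right|left; exists k].
Qed.

Lemma Pn_gap n (x y : rat) : Pn n x -> Pn n y -> y < x -> y <= x - 1.
Proof. by move=> [k [_ ->]] [k' [_ ->]]; rewrite ltr_nat lerBrDr natr1 ler_nat. Qed.

Lemma semilinear_sat_Qn n phi : semilinear (fun e => sat (Qn n) e phi).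
Proof.
elim: phi => [t1 t2|t1 t2|t||g IH|g IHg h IHh|g IHg h IHh|g IHg h IHh|i g IH|i g IH] /=.
- exact: semilinear_eq (teval_affine n t1) (teval_affine n t2).
- exact: semilinear_lt (teval_affine n t1) (teval_affine n t2).
- exact: semilinear_Pn (teval_affine n t).
- by exists nil.
- exact: semilinear_not.
- exact: (semilinear_op and IHg IHh).
- exact: (semilinear_op or IHg IHh).
- exact: (semilinear_op (fun a b => a -> b) IHg IHh).
- exact: (semilinear_forall i IH).
- exact: (semilinear_exists i IH).
Qed.

Lemma DCI_Qn n : DCI (Qn n).
Proof.
move=> phi v e; have [B hB] := semilinear_fiber v e (semilinear_sat_Qn n phi).
exact: dci_of_sign_pattern hB.
Qed.

(** * The instances of DCI as first-order sentences *)

Fixpoint term_bound (t : term) : nat :=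
  match t with
  | tvar i => i.+1
  | tzero => 0
  | tplus a b => maxn (term_bound a) (term_bound b)
  end.

Fixpoint formula_bound (phi : formula) : nat :=
  match phi with
  | fEq a b | fLt a b => maxn (term_bound a) (term_bound b)
  | fP a => term_bound a
  | fBot => 0
  | fNot g => formula_bound g
  | fAnd g h | fOr g h | fImp g h => maxn (formula_bound g) (formula_bound h)
  | fAll i g | fEx i g => maxn i.+1 (formula_bound g)
  end.

Lemma upd_same (M : Lstruct) (e : nat -> M) i x : upd e i x i = x.
Proof. by rewrite /upd eqxx. Qed.

Lemma upd_other (M : Lstruct) (e : nat -> M) i j x : j != i -> upd e i x j = e j.
Proof. by rewrite /upd => /negbTE ->. Qed.

Lemma teval_ext (M : Lstruct) (e e' : nat -> M) t :
  (forall j, (j < term_bound t)%N -> e j = e' j) -> teval M e t = teval M e' t.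
Proof.
elim: t => [i||a IHa b IHb] /= he; [exact: he|by []|].
by rewrite IHa ?IHb // => j hj; apply: he; rewrite leq_max hj ?orbT.
Qed.

Lemma sat_ext (M : Lstruct) phi (e e' : nat -> M) :
  (forall j, (j < formula_bound phi)%N -> e j = e' j) -> (sat M e phi <-> sat M e' phi).
Proof.
elim: phi e e' => [a b|a b|a||g IH|g IHg h IHh|g IHg h IHh|g IHg h IHh|i g IH|i g IH]
  e e' /= he.
- by rewrite (teval_ext (t := a) (e' := e')) ?(teval_ext (t := b) (e' := e')) //
    => j hj; apply: he; rewrite leq_max hj ?orbT.
- by rewrite (teval_ext (t := a) (e' := e')) ?(teval_ext (t := b) (e' := e')) //
    => j hj; apply: he; rewrite leq_max hj ?orbT.
- by rewrite (teval_ext (e' := e')).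
- by [].
- by rewrite (IH e e').
- by rewrite (IHg e e') ?(IHh e e') // => j hj; apply: he; rewrite leq_max hj ?orbT.
- by rewrite (IHg e e') ?(IHh e e') // => j hj; apply: he; rewrite leq_max hj ?orbT.
- by rewrite (IHg e e') ?(IHh e e') // => j hj; apply: he; rewrite leq_max hj ?orbT.
- have hx x : sat M (upd e i x) g <-> sat M (upd e' i x) g.
    by apply: IH => j hj; rewrite /upd; case: eqP => // _; apply: he; rewrite leq_max hj orbT.
  by split=> h x; apply/hx.
- have hx x : sat M (upd e i x) g <-> sat M (upd e' i x) g.
    by apply: IH => j hj; rewrite /upd; case: eqP => // _; apply: he; rewrite leq_max hj orbT.
  by split=> -[x /hx h]; exists x.
Qed.

Definition dci_instance (M : Lstruct) (A : M -> Prop) : Prop :=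
  ((exists s : M, forall x : M, slt M x s -> A x) /\
   (forall y : M, (forall x : M, slt M x y -> A x) ->
      exists u : M, slt M y u /\ forall x : M, slt M x u -> A x))
  -> forall y : M, A y.

Definition all_below (v w : nat) (phi : formula) : formula :=
  fAll v (fImp (fLt (tvar v) (tvar w)) phi).

(* [s], [s.+1], [s.+2] are fresh for [phi] and distinct from [v]; they stand for
   the variables s, v, u of DCI_phi. *)
Definition dci_formula (phi : formula) (v : nat) : formula :=
  let s := maxn (formula_bound phi) v.+1 in
  fImp (fAnd (fEx s (all_below v s phi))
             (fAll s.+1 (fImp (all_below v s.+1 phi)
                (fEx s.+2 (fAnd (fLt (tvar s.+1) (tvar s.+2)) (all_below v s.+2 phi))))))
       (fAll v phi).

Lemma sat_all_below (M : Lstruct) (e e0 : nat -> M) v w phi : w != v ->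
  (forall j, (j < formula_bound phi)%N -> j != v -> e j = e0 j) ->
  sat M e (all_below v w phi) <-> forall x, slt M x (e w) -> sat M (upd e0 v x) phi.
Proof.
move=> wv he; have agree x : sat M (upd e v x) phi <-> sat M (upd e0 v x) phi.
  by apply: sat_ext => j hj; rewrite /upd; case: eqP => // /eqP; exact: he.
rewrite /all_below; cbn [sat teval]; setoid_rewrite upd_same.
by setoid_rewrite (upd_other _ _ wv); split=> h x /h /agree.
Qed.

Lemma sat_dci_formula (M : Lstruct) phi v (e : nat -> M) :
  sat M e (dci_formula phi v) <-> dci_instance (fun x : M => sat M (upd e v x) phi).
Proof.
rewrite /dci_formula; set s := maxn _ _.
have below (e' : nat -> M) w : (s <= w)%N -> (forall j, (j < s)%N -> e' j = e j) ->
    sat M e' (all_below v w phi) <-> forall x, slt M x (e' w) -> sat M (upd e v x) phi.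
  move=> sw he'; apply: sat_all_below => [|j hj _]; first by apply/eqP; lia.
  by apply: he'; rewrite /s; lia.
have below_s S : sat M (upd e s S) (all_below v s phi) <->
    forall x, slt M x S -> sat M (upd e v x) phi.
  rewrite below ?upd_same //; try lia; by move=> j hj; rewrite upd_other //; lia.
have below_y Y : sat M (upd e s.+1 Y) (all_below v s.+1 phi) <->
    forall x, slt M x Y -> sat M (upd e v x) phi.
  rewrite below ?upd_same //; try lia; by move=> j hj; rewrite upd_other //; lia.
have below_u Y U : sat M (upd (upd e s.+1 Y) s.+2 U) (all_below v s.+2 phi) <->
    forall x, slt M x U -> sat M (upd e v x) phi.
  rewrite below ?upd_same //; try lia; by move=> j hj; rewrite !upd_other //; lia.
have at_y Y U : upd (upd e s.+1 Y) s.+2 U s.+1 = Y.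
  by rewrite upd_other ?upd_same //; lia.
cbn [sat teval]; setoid_rewrite below_s; setoid_rewrite below_y.
by setoid_rewrite below_u; setoid_rewrite at_y; setoid_rewrite upd_same.
Qed.

(** * Łoś's theorem and the failure of o-minimality *)

Lemma size_le_cover (T : Type) (X : eqType) (cover : T -> X -> Prop) (l : list T) (s : seq X) :
  uniq s -> (forall p x y, cover p x -> cover p y -> x = y) ->
  (forall x, x \in s -> exists2 p, List.In p l & cover p x) -> (size s <= size l)%N.
Proof.
move=> + cover_inj; elim: l s => [|p l IH] s us hs.
  by case: s us hs => // x s _ /(_ x (mem_head x s)) [].
case: (classic (exists2 x0, x0 \in s & cover p x0)) => [[x0 sx0 px0]|nop]; last first.
  apply: leqW; apply: IH => // x sx; have [q [<-|lq] qx] := hs x sx; last by exists q.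
  by case: nop; exists x.
have s_gt0 : (0 < size s)%N by case: (s) sx0.
rewrite -(ltn_predK s_gt0) ltnS -(size_rem sx0).
apply: IH (rem_uniq x0 us) _ => x; rewrite mem_rem_uniq // => /andP [xx0 sx].
have [q [<-|lq] qx] := hs x sx; last by exists q.
by move: xx0; rewrite (cover_inj _ _ _ qx px0) eqxx.
Qed.

Section Ultraproduct.
Variable F : (nat -> Prop) -> Prop.
Hypothesis ultraF : ultrafilter F.

Lemma ultra_true : F (fun=> True).
Proof. by case: ultraF. Qed.

Lemma ultra_mono (A B : nat -> Prop) : F A -> (forall n, A n -> B n) -> F B.
Proof. by case: ultraF => _ _ mono _ _; exact: mono. Qed.

Lemma ultra_ext (A B : nat -> Prop) : (forall n, A n <-> B n) -> F A <-> F B.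
Proof. by move=> AB; split=> hF; apply: ultra_mono hF _ => n /AB. Qed.

Lemma ultra_witness (A : nat -> Prop) : F A -> exists n, A n.
Proof.
case: ultraF => _ F0 mono _ _ FA; apply: NNPP => none; apply: F0.
by apply: mono FA _ => n An; apply: none; exists n.
Qed.

Lemma ultra_andI (A B : nat -> Prop) : F A -> F B -> F (fun n => A n /\ B n).
Proof. by case: ultraF => _ _ _ Fand _; exact: Fand. Qed.

Lemma ultra_and (A B : nat -> Prop) : F (fun n => A n /\ B n) <-> F A /\ F B.
Proof.
split=> [FAB|[]]; last exact: ultra_andI.
by split; apply: ultra_mono FAB _ => n [].
Qed.

Lemma ultra_not (A : nat -> Prop) : F (fun n => ~ A n) <-> ~ F A.
Proof.
case: ultraF => _ _ _ _ Fnot; split=> [FnA FA|]; last by case: (Fnot A).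
by have [n []] := ultra_witness (ultra_andI FnA FA).
Qed.

Lemma ultra_or (A B : nat -> Prop) : F (fun n => A n \/ B n) <-> F A \/ F B.
Proof.
split=> [FAB|[FA|FB]]; [|by apply: ultra_mono FA _; left|by apply: ultra_mono FB _; right].
case: (classic (F A)) => [|/ultra_not FnA]; [by left|right].
by apply: ultra_mono (ultra_andI FAB FnA) _ => n [[]].
Qed.

Lemma ultra_imp (A B : nat -> Prop) : F (fun n => A n -> B n) <-> (F A -> F B).
Proof.
split=> [FAB FA|FAB].
  by apply: ultra_mono (ultra_andI FAB FA) _ => n [].
case: (classic (F A)) => [/FAB FB|/ultra_not FnA]; first by apply: ultra_mono FB _.
by apply: ultra_mono FnA _.
Qed.

Lemma ultra_exists (P : nat -> rat -> Prop) :
  F (fun n => exists q, P n q) <-> exists x : nat -> rat, F (fun n => P n (x n)).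
Proof.
split=> [Fex|[x Fx]]; last by apply: ultra_mono Fx _ => n; exists (x n).
have [x hx] : exists x : nat -> rat, forall n, (exists q, P n q) -> P n (x n).
  apply: (choice (fun n q => (exists q', P n q') -> P n q)) => n.
  by case: (classic (exists q, P n q)) => [[q Pq]|none]; [exists q|exists 0].
by exists x; apply: ultra_mono Fex _.
Qed.

Lemma ultra_forall (P : nat -> rat -> Prop) :
  F (fun n => forall q, P n q) <-> forall x : nat -> rat, F (fun n => P n (x n)).
Proof.
split=> [Fall x|Fx]; first by apply: ultra_mono Fall _ => n; apply.
apply: NNPP => /ultra_not Fnall.
have [x FnPx] : exists x : nat -> rat, F (fun n => ~ P n (x n)).
  apply/(ultra_exists (fun n q => ~ P n q)); apply: ultra_mono Fnall _ => n nall.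
  by apply: NNPP => none; apply: nall => q; apply: NNPP => nPq; apply: none; exists q.
exact: (proj1 (ultra_not _) FnPx (Fx x)).
Qed.

Definition env_at (e : nat -> ultraQ F) (n : nat) : nat -> rat := fun j => e j n.

Lemma teval_ultraQ (e : nat -> ultraQ F) t n :
  teval (ultraQ F) e t n = teval (Qn n) (env_at e n) t.
Proof. by elim: t => //= a IHa b IHb; rewrite IHa IHb. Qed.

Lemma env_at_upd (e : nat -> ultraQ F) i (x : ultraQ F) n :
  env_at (upd e i x) n = upd (M := Qn n) (env_at e n) i (x n).
Proof. by apply: functional_extensionality => j; rewrite /env_at /upd; case: (j == i). Qed.

Theorem Los phi (e : nat -> ultraQ F) :
  sat (ultraQ F) e phi <-> F (fun n => sat (Qn n) (env_at e n) phi).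
Proof.
have step g i e0 : (forall e, sat (ultraQ F) e g <-> F (fun n => sat (Qn n) (env_at e n) g)) ->
    forall x : ultraQ F, sat (ultraQ F) (upd e0 i x) g <->
      F (fun n => sat (Qn n) (upd (M := Qn n) (env_at e0 n) i (x n)) g).
  by move=> IH x; rewrite IH; apply: ultra_ext => n; rewrite env_at_upd.
elim: phi e => [a b|a b|a||g IH|g IHg h IHh|g IHg h IHh|g IHg h IHh|i g IH|i g IH] e /=.
- by apply: ultra_ext => n; rewrite !teval_ultraQ.
- by apply: ultra_ext => n; rewrite !teval_ultraQ.
- by apply: ultra_ext => n; rewrite !teval_ultraQ.
- by split=> // /ultra_witness [].
- by rewrite IH ultra_not.
- by rewrite IHg IHh ultra_and.
- by rewrite IHg IHh ultra_or.
- by rewrite IHg IHh ultra_imp.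
- setoid_rewrite (step g i e IH); symmetry.
  exact: (ultra_forall (fun n q => sat (Qn n) (upd (M := Qn n) (env_at e n) i q) g)).
- setoid_rewrite (step g i e IH); symmetry.
  exact: (ultra_exists (fun n q => sat (Qn n) (upd (M := Qn n) (env_at e n) i q) g)).
Qed.

Lemma DCI_ultraQ : DCI (ultraQ F).
Proof.
move=> phi v e; apply/sat_dci_formula/Los; apply: ultra_mono ultra_true _ => n _.
by apply/sat_dci_formula; exact: DCI_Qn.
Qed.

Hypothesis nonprincipalF : nonprincipal F.

Lemma ultra_ge k : F (fun n => (k <= n)%N).
Proof.
elim: k => [|k IH]; first by apply: ultra_mono ultra_true _.
have Fnk : F (fun n => n <> k) by apply/ultra_not; exact: nonprincipalF.
by apply: ultra_mono (ultra_andI IH Fnk) _ => n [kn nk]; lia.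
Qed.

Definition cst_seq (k : nat) : ultraQ F := fun=> k%:R.

Lemma P_cst_seq k : sP (ultraQ F) (cst_seq k).
Proof. by apply: ultra_mono (ultra_ge k) _ => n kn; exists k. Qed.

Lemma interval_not_subset_P lo hi (x : ultraQ F) :
  sP (ultraQ F) x -> in_piece (ultraQ F) (pinterval (ultraQ F) lo hi) x ->
  exists2 y, in_piece (ultraQ F) (pinterval (ultraQ F) lo hi) y & ~ sP (ultraQ F) y.
Proof.
move=> Px [xlo xhi].
have [a [a_ge lo_a Fax]] : exists a : nat -> rat, [/\ forall n, x n - 1 <= a n,
    (if lo is Some l then forall n, l n <= a n else True) & F (fun n => a n < x n)].
  case: lo xlo => [l|] xlo; last first.
    exists (fun n => x n - 1); split=> //.
    by apply: ultra_mono ultra_true _ => n _; lra.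
  exists (fun n => Num.max (l n) (x n - 1)); split=> [n|n|]; rewrite ?le_max ?lexx ?orbT //.
  by apply: ultra_mono xlo _ => n ln; rewrite gt_max ln /=; lra.
(* [y] lies strictly between [max(lo, x - 1)] and [x], hence outside P. *)
pose y n := (a n + x n) / 2.
exists y; first split.
- case: lo lo_a {xlo} => [l|] // lo_a.
  by apply: ultra_mono Fax _ => n axn; have := lo_a n; rewrite /y; lra.
- case: hi xhi => [h|] // xhi.
  by apply: ultra_mono (ultra_andI xhi Fax) _ => n [xh axn]; rewrite /y; lra.
move=> Py; have [n [[Pxn Pyn] axn]] := ultra_witness (ultra_andI (ultra_andI Px Py) Fax).
have yx : y n < x n by rewrite /y; lra.
by have := Pn_gap Pxn Pyn yx; have := a_ge n; rewrite /y; lra.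
Qed.

Lemma not_o_minimal_ultraQ : ~ o_minimal (ultraQ F).
Proof.
move=> /(_ (sP (ultraQ F))) [|l hl]; first by exists (fP (tvar 0)), 0%N, (fun _ _ => 0).
pose cover p k := List.In p l /\ in_piece (ultraQ F) p (cst_seq k).
suff : (size (iota 0 (size l).+1) <= size l)%N by rewrite size_iota ltnn.
apply: (size_le_cover (cover := cover)) (iota_uniq _ _) _ _ => [[c|lo hi] j k|j _].
- move=> [_ Fj] [_ Fk]; have [n [jc kc]] := ultra_witness (ultra_andI Fj Fk).
  have : (j%:R : rat) = k%:R by rewrite /cst_seq in jc kc; rewrite jc kc.
  by move/eqP; rewrite eqr_nat => /eqP.
- move=> [lp Pj] _; have [y yin nPy] := interval_not_subset_P (P_cst_seq j) Pj.
  by exfalso; apply: nPy; apply/hl; exists (pinterval _ lo hi).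
- by have [p lp pj] := proj1 (hl _) (P_cst_seq j); exists p.
Qed.

End Ultraproduct.

Unset Implicit Arguments.

Theorem mainTheorem6 (F : (nat -> Prop) -> Prop) :
  ultrafilter F -> nonprincipal F ->
  DCI (ultraQ F) /\ ~ o_minimal (ultraQ F).
Proof.
by move=> ultraF nonprincipalF; split; [exact: DCI_ultraQ|exact: not_o_minimal_ultraQ].
Qed.
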